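(* Every $W_1$-module in category $\mathcal{J}_1$ is a polynomial module.
   Context: Take $n=1$. Let $\mathcal{F}(\mathbb{T}^1)$ be the commutative algebra with $\mathbb{C}$-basis $e_m=e^{2\pi i m x}$, $m\in\mathbb{Z}$, and $e_me_k=e_{m+k}$. Let $W_1$ be the Lie algebra with $\mathbb{C}$-basis $d(s)=\frac{1}{2\pi i}e^{2\pi i s x}\frac{d}{dx}$, $s\in\mathbb{Z}$, and bracket $[d(s),d(m)]=(m-s)\,d(s+m)$. $W_1$ acts on $\mathcal{F}(\mathbb{T}^1)$ by derivations via $d(s)e_m=m\,e_{m+s}$. Category $\mathcal{J}_1$ consists of $W_1$-modules $J$ that are also $\mathcal{F}(\mathbb{T}^1)$-modules and satisfy: (J1) $d(0)$ acts diagonalizably on $J$; (J2) $J$ is a free $\mathcal{F}(\mathbb{T}^1)$-module of finite rank; (J3) $u(fw)=(uf)w+f(uw)$ for all $u\in W_1$, $f\in\mathcal{F}(\mathbb{T}^1)$, $w\in J$. A module $J$ in $\mathcal{J}_1$ is a polynomial module if there is a basis $v_1,\dots,v_k$ of $J$ over $\mathcal{F}(\mathbb{T}^1)$ such that $d(s)(e_m v_r)=\sum_{\ell=1}^k f_{r\ell}(s,m)\,e_{m+s}v_\ell$ for all $s,m\in\mathbb{Z}$, where each $f_{r\ell}(s,m)$ is a polynomial in $s$ and $m$. *)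

From HB Require Import structures.
From mathcomp Require Import all_boot all_order all_algebra.
From mathcomp Require Import complex.
From mathcomp Require Import reals Rstruct.
Set Implicit Arguments. Unset Strict Implicit. Unset Printing Implicit Defensive.
Import Order.TTheory GRing.Theory Num.Theory.
Local Open Scope ring_scope.

Notation CC := (complex Rdefinitions.R).

Section J1.
Variable V : lmodType CC.

(* E m : the action of the basis element e_m = exp(2 pi i m x) of F(T^1);
   D s : the action of the basis element d(s) of W_1.  Both algebras have
   the given C-bases, so their (C-linear) actions are determined by these. *)
Variables (E D : int -> V -> V).

Definition lin (f : V -> V) : Prop :=
  forall (a : CC) (x y : V), f (a *: x + y) = a *: f x + f y.

Definition is_Fmodule : Prop :=
  [/\ forall m, lin (E m),
      forall w, E 0 w = w &
      forall m k w, E m (E k w) = E (m + k) w].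

Definition is_W1module : Prop :=
  (forall s, lin (D s)) /\
  forall s m w, D s (D m w) - D m (D s w) = (m - s)%:~R *: D (s + m) w.

(* (J3) for u = d(s), f = e_m, using d(s) e_m = m e_(m+s). *)
Definition J3 : Prop :=
  forall s m w, D s (E m w) = m%:~R *: E (m + s) w + E m (D s w).

Definition J1 : Prop :=
  forall w : V, exists (n : nat) (lam : 'I_n -> CC) (u : 'I_n -> V),
    (forall i, D 0 (u i) = lam i *: u i) /\ w = \sum_(i < n) u i.

(* v_1..v_k is a basis of V over F(T^1): an element of F^k is a k-tuple of
   finite linear combinations of the e_m, encoded by a finite list S of
   exponents and coefficients c m r. *)
Definition F_comb (k : nat) (v : 'I_k -> V) (S : seq int)
    (c : int -> 'I_k -> CC) : V :=
  \sum_(m <- S) \sum_(r < k) c m r *: E m (v r).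

Definition F_basis (k : nat) (v : 'I_k -> V) : Prop :=
  (forall w : V, exists (S : seq int) (c : int -> 'I_k -> CC),
      w = F_comb v S c) /\
  (forall (S : seq int) (c : int -> 'I_k -> CC), uniq S ->
      F_comb v S c = 0 -> forall m r, m \in S -> c m r = 0).

Definition J2 : Prop := exists (k : nat) (v : 'I_k -> V), F_basis v.

Definition in_J1 : Prop := [/\ is_Fmodule, is_W1module, J1, J2 & J3].

(* Evaluation of a polynomial in two variables (s, m), represented as an
   element of C[s][m] = {poly {poly C}}: outer variable s, inner m. *)
Definition eval2 (p : {poly {poly CC}}) (s m : int) : CC :=
  (p.[(s%:~R)%:P]).[m%:~R].

Definition polynomial_module : Prop :=
  exists (k : nat) (v : 'I_k -> V), F_basis v /\
    exists f : 'I_k -> 'I_k -> {poly {poly CC}},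
      forall (s m : int) (r : 'I_k),
        D s (E m (v r)) = \sum_(l < k) eval2 (f r l) s m *: E (m + s) (v l).

End J1.

(* Since d(0) is diagonalisable, V has an F(T^1)-basis u_1, ..., u_N of
   d(0)-eigenvectors whose eigenvalues are equal or differ by a non-integer.
   Comparing weights gives d(s) u_r = e_s sum_l Q(s)_rl u_l for scalar matrices
   Q(s), and the Witt relations become
     [Q(m), Q(s)] = (m - s) Q(s + m) - m Q(m) + s Q(s).
   With H = Q(-1), ad H acts on the N-th finite difference of s |-> Q(s - 1)
   at 0 as multiplication by N - 1; since ad H has finitely many eigenvalues,
   high differences vanish and Q is polynomial on s >= -1 by Newton's formula.
   The relation for (s, t) with t large extends this to every s, and then
   d(s)(e_m u_r) = sum_l (m delta_rl + Q(s)_rl) e_(m+s) u_l. *)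

From mathcomp Require Import all_boot all_order all_algebra.
From mathcomp Require Import complex reals Rstruct.
From mathcomp Require Import ring zify.
From Stdlib Require Import Classical ClassicalEpsilon.
Set Implicit Arguments. Unset Strict Implicit. Unset Printing Implicit Defensive.
Import Order.TTheory GRing.Theory Num.Theory.
Local Open Scope ring_scope.

Section FiniteDifferences.
Variable M : zmodType.
Implicit Types (g : int -> M) (a : int).

Definition fdiff g a := g (a + 1) - g a.
Definition fdiffn (N : nat) g := iter N fdiff g.

Lemma fdiffnS N g a : fdiffn N.+1 g a = fdiffn N g (a + 1) - fdiffn N g a.
Proof. by []. Qed.

Lemma fdiffnSr N g : fdiffn N.+1 g = fdiffn N (fdiff g).
Proof. exact: iterSr. Qed.

Lemma newton_forward g a (k : nat) :
  g (a + k%:Z) = \sum_(j < k.+1) fdiffn j g a *+ 'C(k, j).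
Proof.
elim: k g => [|k IHk] g; first by rewrite big_ord1 addr0.
have -> : g (a + k.+1%:Z) = fdiff g (a + k%:Z) + g (a + k%:Z).
  by rewrite /fdiff -addn1 PoszD addrA subrK.
rewrite !IHk [RHS]big_ord_recl.
under eq_bigr do rewrite -fdiffnSr.
under [in RHS]eq_bigr do rewrite lift0 binS mulrnDr.
rewrite big_split /= [in RHS]big_ord_recr /= (bin_small (ltnSn k)) addr0.
rewrite [X in _ + X]big_ord_recl bin0 addrC addrCA; congr (_ + _).
by rewrite /= bin0.
Qed.

Lemma newton_forward_vanishing g a (B : nat) :
  (forall N, (B <= N)%N -> fdiffn N g a = 0) ->
  forall k : nat, g (a + k%:Z) = \sum_(j < B) fdiffn j g a *+ 'C(k, j).
Proof.
move=> fdiffn0 k; pose F j := fdiffn j g a *+ 'C(k, j).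
rewrite newton_forward (big_ord_widen _ F (leq_addr B k.+1)).
rewrite (big_ord_widen _ F (leq_addl k.+1 B)) big_mkcond [RHS]big_mkcond /=.
apply: eq_bigr => j _; rewrite /F.
case: ltnP => [ltjk|lekj]; case: ltnP => [ltjB|leBj] //.
- by rewrite fdiffn0 ?mul0rn.
- by rewrite bin_small ?mulr0n.
Qed.

End FiniteDifferences.

Section MatrixBracket.
Variables (R : comPzRingType) (n : nat).
Implicit Types (A B H : 'M[R]_n) (g : int -> 'M[R]_n).

Definition mxbracket A B := A *m B - B *m A.

Lemma mxbracketBr A B1 B2 :
  mxbracket A (B1 - B2) = mxbracket A B1 - mxbracket A B2.
Proof.
by rewrite /mxbracket mulmxBr mulmxBl; apply/matrixP => i j; rewrite !mxE; ring.
Qed.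

Lemma mxbracket_fdiffn H g :
  (forall a, mxbracket H (g a) =
     (a - 1)%:~R *: g a - a%:~R *: g (a - 1) + g 0) ->
  forall (N : nat) a, mxbracket H (fdiffn N g a) =
     (a + N%:Z - 1)%:~R *: fdiffn N g a - a%:~R *: fdiffn N g (a - 1)
     + (N == 0)%:R *: g 0.
Proof.
move=> brHg; elim=> [|N IHN] a; first by rewrite brHg addr0 scale1r.
rewrite !fdiffnS mxbracketBr !IHN subrK addrK.
apply/matrixP=> i j; rewrite !mxE /= -[N.+1]addn1 !(PoszD, intrD, intrB); ring.
Qed.

End MatrixBracket.

Section NumField.
Variable F : numFieldType.

Lemma nat_roots_bounded (p : {poly F}) :
  p != 0 -> exists B, forall N, (B <= N)%N -> ~~ root p N%:R.
Proof.
move=> p0; apply: NNPP => unbounded.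
have large_root B : exists2 N, (B <= N)%N & root p N%:R.
  apply: NNPP => no_root; apply: unbounded; exists B => N leBN.
  by apply/negP => rootN; apply: no_root; exists N.
have roots_of_size j : exists rs : seq nat,
    [/\ size rs = j, uniq rs & all (fun x => root p x%:R) rs].
  elim: j => [|j [rs [<- urs rootrs]]]; first by exists [::].
  have [N ltN rootN] := large_root (\max_(x <- rs) x).+1.
  exists (N :: rs); split=> //=; last by rewrite rootN.
  rewrite urs andbT; apply: contraTN ltN => rsN.
  by rewrite -leqNgt (@leq_bigmax_seq _ rs xpredT id N rsN).
have [rs [size_rs urs rootrs]] := roots_of_size (size p).
move/negP: p0; apply; apply/eqP.
apply: (@roots_geq_poly_eq0 _ p [seq x%:R | x <- rs]).
- by rewrite all_map.
- by rewrite map_inj_uniq // => x y /eqP; rewrite eqr_nat => /eqP.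
- by rewrite size_map size_rs.
Qed.

Lemma mxbracket_nat_eigen_eventually0 n (H : 'M[F]_n) (X : nat -> 'M[F]_n) :
  (forall N, mxbracket H (X N) = N%:R *: X N) ->
  exists B, forall N, (B <= N)%N -> X N = 0.
Proof.
move=> eigX; pose adH := lin_mx (mulmx H) - lin_mx (mulmxr H).
have adHE Y : mxvec Y *m adH = mxvec (mxbracket H Y).
  by rewrite mulmxBr !mul_vec_lin linearB.
have [B notroot] := nat_roots_bounded (monic_neq0 (char_poly_monic adH)).
exists B => N leBN; apply/eqP; apply: contraNT (notroot N leBN) => XN0.
rewrite -eigenvalue_root_char; apply/eigenvalueP; exists (mxvec (X N)).
  by rewrite adHE eigX linearZ.
by rewrite mxvec_eq0.
Qed.

Definition binom_poly (j : nat) : {poly F} :=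
  (j`!%:R)^-1 *: \prod_(i < j) ('X - i%:R%:P).

Lemma horner_binom_poly j (m : nat) : (binom_poly j).[m%:R] = 'C(m, j)%:R.
Proof.
have prod_ffact : \prod_(i < j) (m%:R - i%:R) = (m ^_ j)%:R :> F.
  elim: j => [|j IHj]; first by rewrite big_ord0.
  rewrite big_ord_recr IHj ffactnSr /=; case: (leqP j m) => [lejm|ltmj].
    by rewrite natrM natrB.
  by rewrite ffact_small // mul0r.
rewrite hornerZ horner_prod; under eq_bigr do rewrite hornerXsubC.
rewrite prod_ffact -bin_ffact natrM [_ * _%:R]mulrC mulKf //.
by rewrite pnatr_eq0 -lt0n fact_gt0.
Qed.

Lemma poly_eq0_int_ray (p : {poly F}) (s0 : int) :
  (forall s : int, s0 <= s -> p.[s%:~R] = 0) -> p = 0.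
Proof.
move=> p_ray; apply: (@roots_geq_poly_eq0 _ p
  [seq (s0 + i%:Z)%:~R | i <- iota 0 (size p)]).
- by apply/allP => x /mapP [i _ ->]; apply/eqP/p_ray; rewrite lerDl.
- by rewrite map_inj_uniq ?iota_uniq // => x y /intr_inj /addrI [].
- by rewrite size_map size_iota.
Qed.

End NumField.

Section PolynomialWittMatrices.
Variables (F : numFieldType) (n : nat) (Q : int -> 'M[F]_n).
Hypothesis bracketQ : forall m s,
  mxbracket (Q m) (Q s) = (m - s)%:~R *: Q (s + m) - m%:~R *: Q m + s%:~R *: Q s.

(* For g a := Q (a - 1), bracketing with Q (-1) multiplies the N-th difference
   of g at 0 by N - 1; only finitely many of these scalars are eigenvalues. *)
Lemma witt_matrix_poly_ray : exists q : 'I_n -> 'I_n -> {poly F},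
  forall s, -1 <= s -> forall r l, Q s r l = (q r l).[s%:~R].
Proof.
pose g a := Q (a - 1).
have bracket_g a :
    mxbracket (Q (-1)) (g a) = (a - 1)%:~R *: g a - a%:~R *: g (a - 1) + g 0.
  rewrite bracketQ /g sub0r; apply/matrixP => i j.
  by rewrite !mxE !(intrD, intrB, intrN) addrC; ring.
have [B fdiffn0] : exists B, forall N, (B <= N)%N -> fdiffn N.+1 g 0 = 0.
  apply: mxbracket_nat_eigen_eventually0 => N.
  rewrite mxbracket_fdiffn // add0r scale0r subr0 /= scale0r addr0.
  by rewrite -[N.+1]addn1 PoszD addrK.
pose c j := fdiffn j g 0.
exists (fun r l => \sum_(j < B.+1) c j r l *: (binom_poly F j \Po ('X + 1))).
move=> s les r l; have [k ->] : exists k : nat, s = k%:Z - 1.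
  by exists (absz (s + 1)); lia.
have -> : Q (k%:Z - 1) = g (0 + k%:Z) by rewrite add0r.
rewrite (newton_forward_vanishing (B := B.+1)) => [|[//|N] /fdiffn0 //].
rewrite summxE horner_sum; apply: eq_bigr => j _.
rewrite -scaler_nat mxE hornerZ horner_comp hornerD hornerX hornerC intrB subrK.
by rewrite -[k%:~R]/(k%:R) horner_binom_poly mulrC.
Qed.

Lemma witt_matrix_poly : exists q : 'I_n -> 'I_n -> {poly F},
  forall s r l, Q s r l = (q r l).[s%:~R].
Proof.
have [q qE] := witt_matrix_poly_ray.
exists q => s r l; have [/qE -> //|lts] := lerP (-1) s.
have bracket_entry t : mxbracket (Q s) (Q t) r l =
    \sum_i (Q s r i * Q t i l - Q s i l * Q t r i).
  by rewrite !mxE -sumrB; apply: eq_bigr => i _; rewrite [Q t r i * _]mulrC.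
(* P t is the (r, l) entry of the bracket relation for (s, t) with q in place
   of Q; it vanishes for large t, and at t = 0, where Q s commutes with
   Q 0 = q(0), it equals s (Q s - q(s)). *)
pose P := \sum_i (Q s r i *: q i l - Q s i l *: q r i)
  - ((s%:~R%:P - 'X) * (q r l \Po ('X + s%:~R%:P))
     - (s%:~R * Q s r l)%:P + 'X * q r l).
have P0 : P = 0.
  apply: (@poly_eq0_int_ray _ P (1 - s)) => t le_st.
  move/matrixP: (bracketQ s t) => /(_ r l).
  rewrite /= bracket_entry !mxE => bracket_st.
  have qEt i j : (q i j).[t%:~R] = Q t i j by rewrite qE //; lia.
  have qEts : (q r l).[t%:~R + s%:~R] = Q (t + s) r l by rewrite -intrD qE //; lia.
  rewrite /P !(hornerE, horner_sum, horner_comp) qEt qEts.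
  under eq_bigr do rewrite !hornerE !qEt.
  by rewrite bracket_st intrB subrr.
have commQs0 : mxbracket (Q s) (Q 0) = 0.
  by rewrite bracketQ !subr0 add0r subrr scale0r addr0.
move: (congr1 (horner^~ 0) P0).
rewrite /P !(hornerE, horner_comp) horner_sum.
have q0 i j : (q i j).[0] = Q 0 i j by rewrite qE.
under eq_bigr do rewrite !hornerE !q0.
rewrite -bracket_entry commQs0 mxE subr0 sub0r -mulrBr => /eqP.
rewrite oppr_eq0 mulf_eq0 intr_eq0 subr_eq0 => /orP [/eqP s0|/eqP //].
by move: lts; rewrite s0.
Qed.

End PolynomialWittMatrices.

Section SumRegrouping.
Variables (R : pzRingType) (W : lmodType R).

Lemma big_partition_undup (I J : eqType) (r : seq I) (f : I -> J) (F : I -> W) :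
  \sum_(i <- r) F i = \sum_(j <- undup (map f r)) \sum_(i <- r | f i == j) F i.
Proof.
under [RHS]eq_bigr do rewrite big_mkcond /=.
rewrite exchange_big /=; apply: eq_big_seq => i ri.
rewrite -big_mkcond -big_filter.
have -> : [seq j <- undup (map f r) | f i == j] = [:: f i].
  rewrite -(filter_pred1_uniq (undup_uniq (map f r))) ?mem_undup ?map_f //.
  by apply: eq_filter => j /=; rewrite eq_sym.
by rewrite big_seq1.
Qed.

Lemma big_scale_collect_ord (T : Type) (r : seq T) (idx : T -> nat)
    (a : T -> R) (b : nat -> W) (n : nat) :
  all (fun t => idx t < n)%N r ->
  \sum_(t <- r) a t *: b (idx t) = \sum_(i < n) (\sum_(t <- r | idx t == i) a t) *: b i.
Proof.
elim: r => [|t r IHr] /=.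
  by rewrite big_nil big1 // => i _; rewrite big_nil scale0r.
case/andP => ltt ltr; rewrite big_cons IHr //.
under [RHS]eq_bigr do rewrite big_cons.
rewrite [RHS](bigD1 (Ordinal ltt)) //= eqxx scalerDl -addrA; congr (_ + _).
rewrite [LHS](bigD1 (Ordinal ltt)) //=; congr (_ + _); apply: eq_bigr => i neq.
by rewrite ifN //; apply: contra neq => /eqP tE; apply/eqP/val_inj; rewrite /= tE.
Qed.

End SumRegrouping.

Section LinearMaps.
Variables (V : lmodType CC) (f : V -> V).
Hypothesis linf : lin f.

Lemma lin0 : f 0 = 0.
Proof.
have := linf 1 0 0; rewrite !scale1r addr0 => f0.
by apply: (addrI (f 0)); rewrite addr0 -f0.
Qed.

Lemma linD x y : f (x + y) = f x + f y.
Proof. by have := linf 1 x y; rewrite !scale1r. Qed.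

Lemma linZ a x : f (a *: x) = a *: f x.
Proof. by have := linf a x 0; rewrite !addr0 lin0 addr0. Qed.

Lemma linB x y : f (x - y) = f x - f y.
Proof. by rewrite linD -scaleN1r linZ scaleN1r. Qed.

Lemma lin_sum (I : Type) (r : seq I) (P : pred I) (F : I -> V) :
  f (\sum_(i <- r | P i) F i) = \sum_(i <- r | P i) f (F i).
Proof. exact: (big_morph f linD lin0). Qed.

Lemma lin_iter k : lin (iter k f).
Proof. by elim: k => [|k IHk] a x y //=; rewrite IHk linD // linZ. Qed.

End LinearMaps.

Section EigenComponents.
Variables (V : lmodType CC) (T : V -> V).
Hypothesis linT : lin T.

Definition is_eigen (mu : CC) (w : V) := T w = mu *: w.

Lemma is_eigen0 mu : is_eigen mu 0.
Proof. by rewrite /is_eigen lin0 // scaler0. Qed.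

Lemma is_eigenZ mu a w : is_eigen mu w -> is_eigen mu (a *: w).
Proof. by rewrite /is_eigen => Tw; rewrite linZ // Tw !scalerA mulrC. Qed.

Definition poly_apply (P : {poly CC}) (w : V) :=
  \sum_(i < size P) P`_i *: iter i T w.

Lemma poly_apply_eigen P mu w : is_eigen mu w -> poly_apply P w = P.[mu] *: w.
Proof.
move=> Tw; have iterT i : iter i T w = mu ^+ i *: w.
  by elim: i => [|i IHi] /=; rewrite ?scale1r // IHi linZ // Tw scalerA exprSr.
rewrite /poly_apply horner_coef scaler_suml; apply: eq_bigr => i _.
by rewrite iterT scalerA.
Qed.

Lemma poly_apply_sum P (I : Type) (r : seq I) (x : I -> V) :
  poly_apply P (\sum_(i <- r) x i) = \sum_(i <- r) poly_apply P (x i).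
Proof.
apply: big_morph => [y z|]; rewrite /poly_apply.
  rewrite -big_split; apply: eq_bigr => i _.
  by rewrite (linD (lin_iter linT i)) scalerDr.
by apply: big1 => i _; rewrite (lin0 (lin_iter linT i)) scaler0.
Qed.

(* Apply the polynomial vanishing exactly at the eigenvalues different from lam. *)
Lemma eigen_component (I : eqType) (r : seq I) (x : I -> V) (mu : I -> CC)
    (lam : CC) (y : V) :
  (forall i, is_eigen (mu i) (x i)) -> is_eigen lam y ->
  y = \sum_(i <- r) x i -> y = \sum_(i <- r | mu i == lam) x i.
Proof.
move=> eigx eigy yE.
pose P := \prod_(nu <- [seq mu i | i <- r & mu i != lam]) ('X - nu%:P).
have P_mu i : i \in r -> mu i != lam -> P.[mu i] = 0.
  by move=> ri neq; apply/rootP; rewrite root_prod_XsubC map_f // mem_filter neq.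
have Plam : P.[lam] != 0.
  rewrite -/(root P lam) root_prod_XsubC; apply/negP => /mapP [i ri lamE].
  by move: ri; rewrite mem_filter lamE eqxx.
apply: (scalerI Plam); rewrite -poly_apply_eigen // [in LHS]yE poly_apply_sum.
rewrite scaler_sumr (bigID (fun i => mu i == lam)) /= [X in _ + X]big_seq_cond.
rewrite [X in _ + X]big1 ?addr0 => [|i /andP [ri neq]].
  by apply: eq_bigr => i /eqP <-; rewrite (poly_apply_eigen _ (eigx i)).
by rewrite (poly_apply_eigen _ (eigx i)) P_mu // scale0r.
Qed.

End EigenComponents.

Section WeightBasis.
Variables (V : lmodType CC) (E D : int -> V -> V).
Hypothesis E_lin : forall m, lin (E m).
Hypothesis E_0 : forall w, E 0 w = w.
Hypothesis E_comp : forall m k w, E m (E k w) = E (m + k) w.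
Hypothesis D_lin : forall s, lin (D s).
Hypothesis D_bracket : forall s m w,
  D s (D m w) - D m (D s w) = (m - s)%:~R *: D (s + m) w.
Hypothesis D_E : forall s m w, D s (E m w) = m%:~R *: E (m + s) w + E m (D s w).

Local Notation has_weight := (is_eigen (D 0)).

Lemma E_weight mu m w : has_weight mu w -> has_weight (mu + m%:~R) (E m w).
Proof. by move=> D0w; rewrite /is_eigen D_E addr0 D0w linZ // scalerDl addrC. Qed.

Lemma D_weight mu s w : has_weight mu w -> has_weight (mu + s%:~R) (D s w).
Proof.
move=> D0w; have := D_bracket 0 s w; rewrite D0w linZ // subr0 add0r => Ds.
by rewrite /is_eigen scalerDl -Ds addrC subrK.
Qed.

Lemma E_K m w : E m (E (- m) w) = w.
Proof. by rewrite E_comp subrr E_0. Qed.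

Lemma E_Kr m w : E (- m) (E m w) = w.
Proof. by rewrite E_comp addNr E_0. Qed.

Implicit Types (B X : seq (CC * V)).

(* A weighted family is a list of pairs (weight, vector); out-of-range indices
   read the pair (0, 0). *)
Definition bvec B i := (nth (0, 0) B i).2.
Definition bwt B i := (nth (0, 0) B i).1.

Definition Cspan B w := exists c : nat -> CC, w = \sum_(i < size B) c i *: bvec B i.

Definition Cfree B := forall c : nat -> CC,
  \sum_(i < size B) c i *: bvec B i = 0 -> forall i, (i < size B)%N -> c i = 0.

Definition int_separated B := forall i j, (i < size B)%N -> (j < size B)%N ->
  forall z : int, bwt B i = bwt B j + z%:~R -> bwt B i = bwt B j.

Definition admissible B :=
  [/\ Cfree B, int_separated B & forall i, has_weight (bwt B i) (bvec B i)].

(* F-linear combinations: t = (m, i, c) stands for c e_m (bvec B i). *)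
Definition Fspan B w := exists ts : seq (int * nat * CC),
  all (fun t => t.1.2 < size B)%N ts /\
  w = \sum_(t <- ts) t.2 *: E t.1.1 (bvec B t.1.2).

Lemma bvec_cat B X i : (i < size B)%N -> bvec (B ++ X) i = bvec B i.
Proof. by move=> ltiB; rewrite /bvec nth_cat ltiB. Qed.

Lemma bwt_cat B X i : (i < size B)%N -> bwt (B ++ X) i = bwt B i.
Proof. by move=> ltiB; rewrite /bwt nth_cat ltiB. Qed.

Lemma Fspan_cat B X w : Fspan B w -> Fspan (B ++ X) w.
Proof.
case=> ts [tsB ->]; exists ts; split.
  by apply/allP => t /(allP tsB) ltB; rewrite size_cat ltn_addr.
by apply: eq_big_seq => t /(allP tsB) ltB; rewrite bvec_cat.
Qed.

Lemma Fspan_sum B (I : Type) (r : seq I) (F : I -> V) :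
  (forall i, Fspan B (F i)) -> Fspan B (\sum_(i <- r) F i).
Proof.
move=> spanF; elim: r => [|i r [ts [tsB sumE]]]; first by exists [::]; rewrite !big_nil.
have [ti [tiB FiE]] := spanF i.
by exists (ti ++ ts); rewrite all_cat tiB tsB big_cons big_cat -FiE -sumE.
Qed.

Lemma Fspan_scale_shift B a m w : Fspan B w -> Fspan B (a *: E m w).
Proof.
case=> ts [tsB ->]; exists [seq (m + t.1.1, t.1.2, a * t.2) | t <- ts].
split; first by rewrite all_map.
rewrite big_map lin_sum // scaler_sumr; apply: eq_bigr => t _.
by rewrite linZ // E_comp scalerA.
Qed.

Lemma Fspan_F_comb B w : Fspan B w ->
  exists S c, w = F_comb E (fun i : 'I_(size B) => bvec B i) S c.
Proof.
case=> ts [tsB ->]; exists (undup [seq t.1.1 | t <- ts]).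
exists (fun m (i : 'I_(size B)) => \sum_(t <- ts | (t.1.1 == m) && (t.1.2 == i)) t.2).
rewrite (big_partition_undup _ (fun t => t.1.1)); apply: eq_bigr => m _.
rewrite -big_filter (eq_big_seq (fun t => t.2 *: E m (bvec B t.1.2))); last first.
  by move=> t; rewrite mem_filter => /andP [/eqP -> _].
rewrite (@big_scale_collect_ord _ _ _ _ (fun t => t.1.2) _
  (fun i => E m (bvec B i)) (size B)).
  by apply: eq_bigr => i _; rewrite big_filter_cond.
by apply/allP => t; rewrite mem_filter => /andP [_ /(allP tsB)].
Qed.

Lemma Cfree_rcons B nu w : Cfree B -> ~ Cspan B w -> Cfree (B ++ [:: (nu, w)]).
Proof.
move=> freeB wB c; rewrite size_cat addn1 big_ord_recr /=.
have -> : bvec (B ++ [:: (nu, w)]) (size B) = w by rewrite /bvec nth_cat ltnn subnn.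
under eq_bigr => i _ do rewrite bvec_cat //.
move=> sum0; have cB0 : c (size B) = 0.
  apply: NNPP => /eqP cB_neq0; apply: wB.
  have wE : c (size B) *: w = - \sum_(i < size B) c i *: bvec B i.
    by apply/eqP; rewrite -addr_eq0 addrC sum0.
  exists (fun i => - (c (size B))^-1 * c i); apply: (scalerI cB_neq0).
  rewrite wE scaler_sumr -sumrN; apply: eq_bigr => i _.
  by rewrite scalerA mulNr mulrN mulrA mulfV // mul1r scaleNr.
move: sum0; rewrite cB0 scale0r addr0 => sum0 i.
by rewrite ltnS leq_eqVlt => /predU1P [->|/(freeB c sum0)].
Qed.

Lemma exists_int_representative B mu : int_separated B ->
  exists nu (n : int), mu = nu + n%:~R /\
    forall j, (j < size B)%N -> forall z : int, bwt B j = nu + z%:~R -> bwt B j = nu.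
Proof.
move=> sepB; have [[j [z [ltj muE]]]|no_j] :=
  classic (exists j (z : int), (j < size B)%N /\ mu = bwt B j + z%:~R).
  by exists (bwt B j), z; split=> // i lti y; apply: sepB.
exists mu, 0; split=> [|i lti z bwtE]; first by rewrite mulr0z addr0.
by case: no_j; exists i, (- z); rewrite bwtE intrN addrK.
Qed.

Lemma int_separated_rcons B nu w : int_separated B ->
  (forall j, (j < size B)%N -> forall z : int, bwt B j = nu + z%:~R -> bwt B j = nu) ->
  int_separated (B ++ [:: (nu, w)]).
Proof.
move=> sepB sep_nu i j; rewrite size_cat addn1 !ltnS.
have bwt_nu : bwt (B ++ [:: (nu, w)]) (size B) = nu by rewrite /bwt nth_cat ltnn subnn.
rewrite leq_eqVlt => /predU1P [->|lti]; rewrite leq_eqVlt => /predU1P [->|ltj] z //.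
- rewrite bwt_nu bwt_cat // => nuE.
  by apply/esym/(sep_nu j ltj (- z)); rewrite nuE intrN addrK.
- by rewrite bwt_nu bwt_cat //; apply: sep_nu.
- by rewrite !bwt_cat //; apply: sepB.
Qed.

(* Shift w by e_(-n) to the representative weight nu of mu + Z, and add it to
   the family unless it is already in the C-span. *)
Lemma admissible_extend_eigen B mu w : admissible B -> has_weight mu w ->
  exists X, admissible (B ++ X) /\ Fspan (B ++ X) w.
Proof.
case=> freeB sepB wtB wtw.
have [nu [n [muE sep_nu]]] := exists_int_representative mu sepB.
pose w' := E (- n) w.
have wt_w' : has_weight nu w' by have := E_weight (- n) wtw; rewrite muE intrN addrK.
have wE : w = E n w' by rewrite /w' E_K.
have [[c w'E]|w'B] := classic (Cspan B w').
  exists [::]; rewrite cats0; split=> //.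
  exists [seq (n, nat_of_ord i, c i) | i <- index_enum 'I_(size B)]; split.
    by apply/allP => t /mapP [i _ ->]; apply: ltn_ord.
  by rewrite big_map wE w'E lin_sum //; apply: eq_bigr => i _; rewrite linZ.
exists [:: (nu, w')]; split; last first.
  exists [:: (n, size B, 1)]; split; first by rewrite /= size_cat addn1 ltnSn.
  by rewrite big_seq1 /= scale1r /bvec nth_cat ltnn subnn.
split; [exact: Cfree_rcons | exact: int_separated_rcons | move=> i].
rewrite /bwt /bvec nth_cat; case: ltnP => [ltiB|_]; first exact: wtB.
by case: (i - size B)%N => [|[|k]] //=; apply: is_eigen0.
Qed.

Lemma admissible_extend_all (P : V -> Prop) B (xs : seq V) :
  (forall B' x, admissible B' -> P x ->
     exists X, admissible (B' ++ X) /\ Fspan (B' ++ X) x) ->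
  admissible B -> (forall x, x \in xs -> P x) ->
  exists X, admissible (B ++ X) /\ forall x, x \in xs -> Fspan (B ++ X) x.
Proof.
move=> extend; elim: xs B => [|x xs IHxs] B admB Pxs.
  by exists [::]; rewrite cats0.
have [X1 [adm1 span1]] := extend B x admB (Pxs x (mem_head x xs)).
have [X2 [adm2 span2]] :=
  IHxs (B ++ X1) adm1 (fun y yxs => Pxs y (mem_behead (s := x :: xs) yxs)).
exists (X1 ++ X2); rewrite catA; split=> // y /predU1P [->|/span2 //].
exact: Fspan_cat.
Qed.

Hypothesis D0_diag : J1 D.

Lemma admissible_extend B x : admissible B ->
  exists X, admissible (B ++ X) /\ Fspan (B ++ X) x.
Proof.
move=> admB; have [k [lam [u [eig_u ->]]]] := D0_diag x.
have [|y /mapP [i _ ->]|X [admX spanX]] := admissible_extend_all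
  (P := fun y => exists mu, has_weight mu y) (xs := [seq u i | i <- enum 'I_k]) _ admB.
- by move=> B' y admB' [mu wty]; exact: admissible_extend_eigen admB' wty.
- by exists (lam i).
exists X; split=> //; apply: Fspan_sum => i.
by apply: spanX; rewrite map_f // mem_enum.
Qed.

Hypothesis free_rank : J2 E.

Lemma exists_admissible_basis : exists X, admissible X /\ forall w, Fspan X w.
Proof.
have [k [v [vspan _]]] := free_rank.
have adm0 : admissible [::].
  by split=> [c _ //|//|i]; rewrite /bwt /bvec nth_nil; apply: is_eigen0.
have [|//|X [admX spanX]] := admissible_extend_all (P := fun => True)
  (xs := [seq v r | r <- enum 'I_k]) _ adm0.
  by move=> B' x admB' _; apply: admissible_extend.
exists X; split=> // w; have [S [c ->]] := vspan w.
apply: Fspan_sum => m; apply: Fspan_sum => r; apply: Fspan_scale_shift.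
by apply: spanX; rewrite map_f // mem_enum.
Qed.

Section StructureMatrices.
Variable X : seq (CC * V).
Hypotheses (admX : admissible X) (spanX : forall w, Fspan X w).
Local Notation N := (size X).
Let u (i : 'I_N) := bvec X i.

Lemma basis_Cfree (c : 'I_N -> CC) : \sum_i c i *: u i = 0 -> forall i, c i = 0.
Proof.
case: admX => freeX _ _ sum0 i.
pose c' j := if insub j is Some k then c k else 0.
have c'E (k : 'I_N) : c' k = c k by rewrite /c' valK.
rewrite -c'E; apply: freeX (ltn_ord i).
by rewrite -[RHS]sum0; apply: eq_bigr => k _; rewrite c'E.
Qed.

Lemma basis_weight_int (i j : 'I_N) (z : int) :
  bwt X i = bwt X j + z%:~R -> bwt X i = bwt X j /\ z = 0.
Proof.
case: admX => _ sepX _ wtE; have wt_eq := sepX i j (ltn_ord i) (ltn_ord j) z wtE.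
split=> //; move: wtE; rewrite -wt_eq -{1}[bwt X i]addr0 => /addrI /esym /eqP.
by rewrite intr_eq0 => /eqP.
Qed.

(* D s (u r) has weight bwt r + s, so E (-s) (D s (u r)) lies in the weight
   space of bwt r, which by int separation is spanned by the u l of that weight. *)
Lemma D_basis_coeffs s r :
  exists c : 'I_N -> CC, D s (u r) = E s (\sum_l c l *: u l).
Proof.
case: admX => _ _ wtX; pose y := E (- s) (D s (u r)).
have wty : has_weight (bwt X r) y.
  by have := E_weight (- s) (D_weight s (wtX r)); rewrite intrN addrK.
have [ts [tsX yE]] := spanX y.
have := eigen_component (D_lin 0)
  (mu := fun t => bwt X t.1.2 + t.1.1%:~R)
  (fun t => is_eigenZ (D_lin 0) t.2 (E_weight t.1.1 (wtX t.1.2))) wty yE.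
rewrite big_seq_cond (eq_bigr (fun t => t.2 *: bvec X t.1.2)); last first.
  move=> t /andP [tsx /eqP wtE].
  have [_ ->] := basis_weight_int (i := r) (j := Ordinal (allP tsX t tsx)) (esym wtE).
  by rewrite E_0.
rewrite -big_filter (@big_scale_collect_ord _ _ _ _ (fun t => t.1.2) _ (bvec X) N).
  by move=> yE'; eexists; rewrite -[D s (u r)](E_K s) -/y yE'.
by apply/allP => t; rewrite mem_filter => /andP [/andP [/(allP tsX)]].
Qed.

Lemma exists_structure_matrices : exists Q : int -> 'M[CC]_N,
  forall s r, D s (u r) = E s (\sum_l Q s r l *: u l).
Proof.
pose c s r := proj1_sig (constructive_indefinite_description _ (D_basis_coeffs s r)).
exists (fun s => \matrix_(r, l) c s r l) => s r.
under eq_bigr do rewrite mxE.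
exact: proj2_sig (constructive_indefinite_description _ (D_basis_coeffs s r)).
Qed.

(* The summand c m' r' e_m' u_r' has weight bwt r' + m'; by int separation it
   has weight bwt r + m only if m' = m and bwt r' = bwt r. *)
Lemma basis_Ffree (S : seq int) (c : int -> 'I_N -> CC) :
  uniq S -> F_comb E u S c = 0 -> forall m r, m \in S -> c m r = 0.
Proof.
case: admX => _ _ wtX uS comb0 m r mS.
pose x (p : int * 'I_N) := c p.1 p.2 *: E p.1 (u p.2).
have sum0 : 0 = \sum_(p <- [seq (m', r') | m' <- S, r' <- index_enum 'I_N]) x p.
  by rewrite big_allpairs -[LHS]comb0.
have := eigen_component (D_lin 0) (x := x) (mu := fun p => bwt X p.2 + p.1%:~R)
  (fun p => is_eigenZ (D_lin 0) _ (E_weight p.1 (wtX p.2)))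
  (is_eigen0 (D_lin 0) (bwt X r + m%:~R)) sum0.
rewrite big_mkcond big_allpairs /= (bigD1_seq m) //=.
rewrite [X in _ + X]big1_seq ?addr0; last first.
  move=> m' /andP [neq _]; apply: big1 => r' _; case: ifP => // /eqP wtE.
  have wtE' : bwt X r' = bwt X r + (m - m')%:~R.
    by apply: (addIr (m'%:~R)); rewrite wtE intrB -addrA subrK.
  have [_ /eqP] := basis_weight_int wtE'; rewrite subr_eq0 => /eqP m'E.
  by move: neq; rewrite m'E eqxx.
move=> comp0.
have : \sum_(j : 'I_N) (if bwt X j == bwt X r then c m j else 0) *: u j = 0.
  rewrite -[LHS](E_Kr m) lin_sum // (_ : \sum_j _ = 0) ?lin0 // [RHS]comp0.
  apply: eq_bigr => j _; rewrite (inj_eq (addIr _)).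
  by case: ifP => _; rewrite linZ // ?scale0r.
by move/basis_Cfree/(_ r); rewrite eqxx.
Qed.

Lemma admissible_F_basis : F_basis E u.
Proof. by split=> [w|]; [apply: Fspan_F_comb | apply: basis_Ffree]. Qed.

Variable Q : int -> 'M[CC]_N.
Hypothesis D_basis : forall s r, D s (u r) = E s (\sum_l Q s r l *: u l).

Definition rowcomb (M : 'M[CC]_N) r := \sum_l M r l *: u l.

Lemma rowcombD M1 M2 r : rowcomb (M1 + M2) r = rowcomb M1 r + rowcomb M2 r.
Proof. by rewrite -big_split; apply: eq_bigr => l _; rewrite mxE scalerDl. Qed.

Lemma rowcombN M r : rowcomb (- M) r = - rowcomb M r.
Proof. by rewrite -sumrN; apply: eq_bigr => l _; rewrite mxE scaleNr. Qed.

Lemma rowcombZ a M r : rowcomb (a *: M) r = a *: rowcomb M r.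
Proof. by rewrite scaler_sumr; apply: eq_bigr => l _; rewrite mxE scalerA. Qed.

Lemma D_rowcomb M s r : D s (rowcomb M r) = E s (rowcomb (M *m Q s) r).
Proof.
rewrite lin_sum //; under eq_bigr do rewrite linZ // D_basis -linZ //.
rewrite -lin_sum //; congr (E s _); under eq_bigr do rewrite scaler_sumr.
rewrite exchange_big /=; apply: eq_bigr => j _.
by rewrite mxE scaler_suml; apply: eq_bigr => l _; rewrite scalerA.
Qed.

Lemma structure_bracket m s : mxbracket (Q m) (Q s) =
  (m - s)%:~R *: Q (s + m) - m%:~R *: Q m + s%:~R *: Q s.
Proof.
have DD_basis a b r :
    D a (D b (u r)) = E (b + a) (rowcomb (b%:~R *: Q b + Q b *m Q a) r).
  by rewrite D_basis D_E D_rowcomb E_comp rowcombD rowcombZ linD // linZ.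
apply/matrixP => r l; apply/eqP; rewrite -subr_eq0 !mxE; apply/eqP.
have := D_bracket s m (u r); rewrite !DD_basis D_basis [m + s]addrC -linZ // -linB //.
move/(congr1 (E (- (s + m)))); rewrite !E_Kr -/(rowcomb _ r) -rowcombZ.
move/eqP; rewrite -subr_eq0 -!rowcombN -!rowcombD => /eqP /basis_Cfree /(_ l).
by rewrite !mxE => Z0; rewrite -[RHS]Z0; ring.
Qed.

Lemma D_E_basis s m r : D s (E m (u r)) =
  \sum_l ((r == l)%:R * m%:~R + Q s r l) *: E (m + s) (u l).
Proof.
rewrite D_E D_basis E_comp lin_sum //.
under [RHS]eq_bigr do rewrite scalerDl.
rewrite big_split /=; congr (_ + _); last by apply: eq_bigr => l _; rewrite linZ.
rewrite (bigD1 r) //= eqxx mul1r big1 ?addr0 // => l.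
by rewrite eq_sym => /negbTE ->; rewrite mul0r scale0r.
Qed.

End StructureMatrices.

Lemma J1_polynomial_module : polynomial_module E D.
Proof.
have [X [admX spanX]] := exists_admissible_basis.
have [Q D_basis] := exists_structure_matrices admX spanX.
have [q qE] := witt_matrix_poly (structure_bracket admX D_basis).
exists (size X), (fun i => bvec X i); split; first exact: admissible_F_basis.
exists (fun r l => map_poly polyC (q r l) + ((r == l)%:R *: 'X)%:P) => s m r.
rewrite (D_E_basis D_basis); apply: eq_bigr => l _.
rewrite /eval2 hornerD horner_map /= hornerC hornerD hornerC hornerZ hornerX.
by rewrite -qE addrC.
Qed.

End WeightBasis.

Theorem theorem1 (V : lmodType CC) (E D : int -> V -> V) :
  in_J1 E D -> polynomial_module E D.
Proof.
case=> [[E_lin E_0 E_comp] [D_lin D_bracket] D0_diag free_rank D_E].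
exact: J1_polynomial_module.
Qed.
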